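(* Let $(\mathbb S,+,\cdot)$ be an S-Field. If $\alpha\in\mathbb S_0$ with $\alpha\neq 0$, then the Standard Base $q_0(\alpha)$ is Reversible, with $\alpha^*=\alpha^{-1}$; that is, $q_0(1)=\alpha^{-1}\cdot(q_0(\alpha)+\alpha)-\alpha$.
   Context: An S-Structure is a triple $(\mathbb S,+,\cdot)$ where $\mathbb S$ is a set and $+,\cdot$ are binary operations on $\mathbb S$ such that: $(\mathbb S,+)$ is a commutative group with identity $0$ (the inverse of $s$ is written $-s$, and $s-t:=s+(-t)$); $\mathbb S$ is closed under $\cdot$; and there exists $s\in\mathbb S$ with $0\cdot s\neq 0$ or $s\cdot 0\neq 0$. Multiplication binds tighter than addition. The structures considered come with a distinguished element of $\mathbb S$ denoted $1$. It is Commutative if $s\cdot t=t\cdot s$ for all $s,t$. For a Commutative S-Structure and $\alpha\in\mathbb S$, put $\mathbb S_\alpha=\{s\in\mathbb S:0\cdot s=s\cdot 0=\alpha\}$ and $\Lambda=\{\alpha\in\mathbb S:\mathbb S_\alpha\neq\emptyset\}$. Wheel Distributive: $s\cdot(t+r)+(s\cdot 0)=(s\cdot t)+(s\cdot r)$ for all $s,t,r\in\mathbb S$. S-Associative: for all $m,n\in\mathbb S_0$ and $s\in\mathbb S$, $m\cdot(n\cdot s)=(m\cdot n)\cdot s-([(m-1)\cdot(n-1)]\cdot(0\cdot s))$. Base: if $\mathbb S_0\neq\emptyset$ and $\alpha\in\Lambda$, $q\in\mathbb S_\alpha$ is a Base for $\mathbb S_\alpha$ if $q+\beta\in\mathbb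 S_\alpha$ for all $\beta\in\mathbb S_0$ and every $s\in\mathbb S_\alpha$ equals $q+\beta$ for some $\beta\in\mathbb S_0$. Coordinated: $\mathbb S_0\neq\emptyset$ and every $\mathbb S_\alpha$ with $\alpha\in\Lambda$ has a Base. Standard Bases: a Coordinated Commutative S-Structure has Standard Bases if there is a specified element $q_0(1)\in\mathbb S_1$ which is a Base for $\mathbb S_1$, and for every $\alpha\in\Lambda$ the element $q_0(\alpha):=\alpha\cdot(q_0(1)+1)-1$ (the Standard Base of $\mathbb S_\alpha$) lies in $\mathbb S_\alpha$ and is a Base for $\mathbb S_\alpha$. An Essential S-Structure is an S-Structure that is Commutative, Wheel Distributive, S-Associative, has Standard Bases (in particular is Coordinated), satisfies $0,1\in\mathbb S_0$, and satisfies $\mathbb S_0=\{1\cdot x:x\in\mathbb S_0\}$. A Unity is an element $e\in\Lambda$ with $e\cdot s=s\cdot e=s$ for all $s\in\mathbb S$. Scalar Inverses: the structure has a Unity $e$ and for every $x\in\mathbb S_0$ with $x\neq 0$ there is $x^{-1}\in\mathbb S_0$ with $x\cdot x^{-1}=x^{-1}\cdot x=e$. An S-Ring is an Essential S-Structure with a Unity; an S-Field is an S-Ring with Scalar Inverses. Reversible: in an Essential S-Structure, for $\alpha\in\Lambda$, the Standard Base $q_0(\alpha)$ is Reversible if there exists $\alpha^*\in\Lambda$ with $q_0(1)=\alpha^*\cdot(q_0(\alpha)+\alpha)-\alpha$. *)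

Set Implicit Arguments.

Record SOps (T : Type) := {
  sadd : T -> T -> T;
  sopp : T -> T;
  szero : T;
  smul : T -> T -> T;
  sone : T;
  sq01 : T
}.

Section Defs.
Variable T : Type.
Variable S : SOps T.

Local Notation "x + y" := (sadd S x y).
Local Notation "x * y" := (smul S x y).
Local Notation "0" := (szero S).
Local Notation "1" := (sone S).

Definition ssub (s t : T) : T := s + sopp S t.
Local Notation "x - y" := (ssub x y).

Definition is_SStructure : Prop :=
  (forall a b c, a + (b + c) = (a + b) + c) /\
  (forall a b, a + b = b + a) /\
  (forall a, 0 + a = a) /\
  (forall a, a + sopp S a = 0) /\
  (exists s, 0 * s <> 0 \/ s * 0 <> 0).

Definition is_Commutative : Prop := forall s t, s * t = t * s.

Definition Sset (alpha s : T) : Prop := 0 * s = alpha /\ s * 0 = alpha.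

Definition in_Lambda (alpha : T) : Prop := exists s, Sset alpha s.

Definition is_WheelDistributive : Prop :=
  forall s t r, s * (t + r) + (s * 0) = (s * t) + (s * r).

Definition is_SAssociative : Prop :=
  forall m n s, Sset 0 m -> Sset 0 n ->
    m * (n * s) = (m * n) * s - (((m - 1) * (n - 1)) * (0 * s)).

Definition is_Base (alpha q : T) : Prop :=
  Sset alpha q /\
  (forall beta, Sset 0 beta -> Sset alpha (q + beta)) /\
  (forall s, Sset alpha s -> exists beta, Sset 0 beta /\ s = q + beta).

Definition is_Coordinated : Prop :=
  (exists s, Sset 0 s) /\
  (forall alpha, in_Lambda alpha -> exists q, is_Base alpha q).

Definition q0 (alpha : T) : T := alpha * (sq01 S + 1) - 1.

Definition has_StandardBases : Prop :=
  is_Coordinated /\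
  is_Base 1 (sq01 S) /\
  (forall alpha, in_Lambda alpha -> is_Base alpha (q0 alpha)).

Definition is_Essential : Prop :=
  is_SStructure /\ is_Commutative /\ is_WheelDistributive /\
  is_SAssociative /\ has_StandardBases /\
  Sset 0 0 /\ Sset 0 1 /\
  (forall x, Sset 0 x <-> exists y, Sset 0 y /\ x = 1 * y).

Definition is_Unity (e : T) : Prop :=
  in_Lambda e /\ forall s, e * s = s /\ s * e = s.

Definition has_ScalarInverses (e : T) : Prop :=
  is_Unity e /\
  forall x, Sset 0 x -> x <> 0 ->
    exists y, Sset 0 y /\ x * y = e /\ y * x = e.

Definition is_SRing (e : T) : Prop := is_Essential /\ is_Unity e.

Definition is_SField (e : T) : Prop := is_SRing e /\ has_ScalarInverses e.

(* q_0(alpha) is Reversible (alpha in Lambda assumed by the paper's definition) *)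
Definition is_Reversible (alpha : T) : Prop :=
  exists astar, in_Lambda astar /\
    sq01 S = astar * (q0 alpha + alpha) - alpha.

End Defs.


(* Scalars m, n in S_0 satisfy m * 0 = 0, so Wheel Distributivity makes
   multiplication by them additive, and S-Associativity together with
   commutativity gives m * (n * s) = n * (m * s).  Applying S-Associativity
   to 1 * (0 * s), where 0 * s is the Unity, shows that the Unity is 1.
   For r = q_0(1) + 1 we have 0 * r = 1, so S-Associativity and
   alpha^-1 * alpha = 1 give
     alpha^-1 * (alpha * r) = r - (alpha^-1 - 1) * (alpha - 1)
                            = r - ((1 - alpha) - (alpha^-1 - 1)),
   after which alpha^-1 * (q_0(alpha) + alpha) - alpha = q_0(1) is an identity
   of the additive group. *)

Set Implicit Arguments.

Section SStructureTheory.

Variable T : Type.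
Variable S : SOps T.

Local Notation "x + y" := (sadd S x y).
Local Notation "- x" := (sopp S x).
Local Notation "x - y" := (ssub S x y).
Local Notation "x * y" := (smul S x y).
Local Notation "0" := (szero S).
Local Notation "1" := (sone S).

Hypothesis HS : is_SStructure S.

Lemma addrA a b c : a + (b + c) = a + b + c.
Proof. destruct HS as (addA & _). apply addA. Qed.

Lemma addrC a b : a + b = b + a.
Proof. destruct HS as (_ & addC & _). apply addC. Qed.

Lemma add0r a : 0 + a = a.
Proof. destruct HS as (_ & _ & add0 & _). apply add0. Qed.

Lemma addrN a : a + - a = 0.
Proof. destruct HS as (_ & _ & _ & addN & _). apply addN. Qed.

Lemma addr0 a : a + 0 = a.
Proof. rewrite addrC. apply add0r. Qed.

Lemma addrK a b : a + b + - b = a.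
Proof. rewrite <- addrA, addrN. apply addr0. Qed.

Lemma addrNK a b : a + - b + b = a.
Proof. rewrite <- addrA, (addrC (- b) b), addrN. apply addr0. Qed.

Lemma addrAC a b c : a + b + c = a + c + b.
Proof. rewrite <- !addrA, (addrC b c). reflexivity. Qed.

Lemma oppr_uniq a b : a + b = 0 -> b = - a.
Proof.
  intros Hab. rewrite <- (add0r b), <- (addrN a), (addrC a), <- addrA, Hab.
  apply addr0.
Qed.

Lemma opprK a : - - a = a.
Proof. symmetry. apply oppr_uniq. rewrite addrC. apply addrN. Qed.

Lemma oppr0 : - 0 = 0.
Proof. symmetry. apply oppr_uniq. apply addr0. Qed.

Lemma opprD a b : - (a + b) = - a + - b.
Proof.
  symmetry. apply oppr_uniq.
  rewrite addrA, (addrAC a b), addrK. apply addrN.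
Qed.

Lemma subr0 a : a - 0 = a.
Proof. unfold ssub. rewrite oppr0. apply addr0. Qed.

Lemma subrr a : a - a = 0.
Proof. apply addrN. Qed.

Lemma addr_sub_cancel q o m n : q + o - ((o - m) - (n - o)) - n + o - m = q.
Proof.
  unfold ssub. rewrite !opprD, !opprK, !addrA, addrK.
  rewrite (addrAC _ (- o) (- n)), addrK, addrNK. apply addrK.
Qed.

Hypothesis HC : is_Commutative S.

Lemma Sset_of_mul0l alpha s : 0 * s = alpha -> Sset S alpha s.
Proof. intros H. split; [| rewrite HC]; exact H. Qed.

Hypothesis HWD : is_WheelDistributive S.

Lemma mulrD_S0 m t r : Sset S 0 m -> m * (t + r) = m * t + m * r.
Proof. intros [_ Hm]. rewrite <- (HWD m t r), Hm. symmetry. apply addr0. Qed.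

Lemma mulrN_S0 m t : Sset S 0 m -> m * - t = - (m * t).
Proof.
  intros Hm. apply oppr_uniq.
  rewrite <- (mulrD_S0 _ _ Hm), addrN. apply Hm.
Qed.

Lemma mulrB_S0 m t r : Sset S 0 m -> m * (t - r) = m * t - m * r.
Proof. intros Hm. unfold ssub. rewrite (mulrD_S0 _ _ Hm), (mulrN_S0 _ Hm). reflexivity. Qed.

Hypothesis H00 : Sset S 0 0.

Lemma Sset_addr_S0 alpha q beta :
  Sset S alpha q -> Sset S 0 beta -> Sset S alpha (q + beta).
Proof.
  intros [Hq _] [Hbeta _]. apply Sset_of_mul0l.
  rewrite (mulrD_S0 _ _ H00), Hq, Hbeta. apply addr0.
Qed.

Lemma Sset0_sub m n : Sset S 0 m -> Sset S 0 n -> Sset S 0 (m - n).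
Proof.
  intros Hm [Hn _]. apply Sset_addr_S0; [exact Hm |]. apply Sset_of_mul0l.
  rewrite (mulrN_S0 _ H00), Hn. apply oppr0.
Qed.

Hypothesis HSA : is_SAssociative S.

Lemma mulCA_S0 m n s : Sset S 0 m -> Sset S 0 n -> m * (n * s) = n * (m * s).
Proof.
  intros Hm Hn.
  rewrite (HSA s Hm Hn), (HSA s Hn Hm), (HC m n), (HC (m - 1) (n - 1)).
  reflexivity.
Qed.

Hypothesis H01 : Sset S 0 1.
Variable e : T.
Hypothesis Hunit : is_Unity S e.

Lemma unity_eq_one : e = 1.
Proof.
  destruct Hunit as [[s0 [Hs0 _]] He].
  assert (Hassoc := HSA s0 H01 H00).
  rewrite Hs0, (proj2 H01), Hs0, subrr, (proj1 (Sset0_sub H00 H01)),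
    (proj2 (He 0)), subr0, (proj2 (He 1)) in Hassoc.
  symmetry. exact Hassoc.
Qed.

Lemma mul1r s : 1 * s = s.
Proof. rewrite <- unity_eq_one. apply Hunit. Qed.

Lemma mulr1 s : s * 1 = s.
Proof. rewrite <- unity_eq_one. apply Hunit. Qed.

Lemma Sset0_in_Lambda m : Sset S 0 m -> in_Lambda S m.
Proof.
  intros Hm. destruct Hunit as [[s0 [Hs0 _]] _].
  exists (m * s0). apply Sset_of_mul0l.
  rewrite (mulCA_S0 s0 H00 Hm), Hs0, unity_eq_one. apply mulr1.
Qed.

Lemma q0_inverse_scalar m n :
  Sset S 0 m -> Sset S 0 n -> n * m = 1 -> Sset S 1 (sq01 S) ->
  n * (q0 S m + m) - m = sq01 S.
Proof.
  intros Hm Hn Hnm Hq.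
  assert (Hr : 0 * (sq01 S + 1) = 1) by apply (Sset_addr_S0 Hq H01).
  assert (Hassoc : n * (m * (sq01 S + 1))
                   = sq01 S + 1 - ((1 - m) - (n - 1))).
  { rewrite (HSA _ Hn Hm), Hnm, mul1r, Hr, mulr1,
      (mulrB_S0 _ _ (Sset0_sub Hn H01)), mulr1, (HC (n - 1) m),
      (mulrB_S0 _ _ Hm), mulr1, (HC m n), Hnm.
    reflexivity. }
  unfold q0.
  rewrite (mulrD_S0 _ _ Hn), (mulrB_S0 _ _ Hn), Hassoc, mulr1, Hnm.
  apply addr_sub_cancel.
Qed.

End SStructureTheory.

Theorem proposition4p2p1 (T : Type) (S : SOps T) (e : T) :
  is_SField S e ->
  forall alpha : T, Sset S (szero S) alpha -> alpha <> szero S ->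
  forall alpha_inv : T,
    Sset S (szero S) alpha_inv ->
    smul S alpha alpha_inv = e -> smul S alpha_inv alpha = e ->
    is_Reversible S alpha /\
    in_Lambda S alpha_inv /\
    sq01 S = ssub S (smul S alpha_inv (sadd S (q0 S alpha) alpha)) alpha.
Proof.
  intros [[[HS [HC [HWD [HSA [[_ [[Hq01 _] _]] [H00 [H01 _]]]]]]] Hunit] _]
    alpha Halpha _ alpha_inv Hinv _ Hinv_alpha.
  rewrite (unity_eq_one HS HC HWD H00 HSA H01 Hunit) in Hinv_alpha.
  assert (Hlambda := Sset0_in_Lambda HS HC HWD H00 HSA H01 Hunit Hinv).
  assert (Hq0 := q0_inverse_scalar HS HC HWD H00 HSA H01 Hunit
                   Halpha Hinv Hinv_alpha Hq01).
  split; [exists alpha_inv |]; split; auto.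
Qed.
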